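(* Let $\mathbf T:=\mathbf T_0^{\otimes m}$, $\mathbf P\in\mathrm{Aut}(\mathbf T)$ and $\mathbf T_{\mathbf P}:=\mathbf P\mathbf T$. Then $$\mathrm{Aut}(\mathbf T_{\mathbf P})=\{\mathbf Q\in\mathrm{Aut}(\mathbf T):\mathbf Q\mathbf P=\mathbf P\mathbf Q\}.$$ Moreover, writing $\mathbf P=\mathbf P_\sigma$ with $\sigma\in\mathcal S_m$, one has $\mathrm{Aut}(\mathbf T_{\mathbf P})=\{\mathbf P_\tau:\tau\in\mathcal S_m,\ \tau\sigma=\sigma\tau\}$.
   Context: $\mathbf T_0=\begin{pmatrix}1&0\\1&1\end{pmatrix}$; rows/columns of $\mathbf T_0^{\otimes m}$ indexed by $x\in\{0,1\}^m$ via the Kronecker rule. For any matrix $\mathbf M$, $\mathrm{Aut}(\mathbf M)$ is the set of permutation matrices $\mathbf Q$ with $\mathbf Q^\top\mathbf M\mathbf Q=\mathbf M$. For $\sigma\in\mathcal S_m$, $\mathbf P_\sigma$ is the permutation matrix with $\mathbf P_\sigma\mathbf e_{(x_1,\dots,x_m)}=\mathbf e_{(x_{\sigma(1)},\dots,x_{\sigma(m)})}$; every element of $\mathrm{Aut}(\mathbf T)$ is of this form for a unique $\sigma$. *)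

From mathcomp Require Import all_boot all_order all_algebra all_fingroup.
Set Implicit Arguments. Unset Strict Implicit. Unset Printing Implicit Defensive.
Import GRing.Theory.
Local Open Scope ring_scope.

Definition T0 : 'M['F_2]_2 := \matrix_(a < 2, b < 2) ((b <= a)%N)%:R.

(* Kronecker rule: index i : 'I_(2^m) corresponds to x = (x_1,...,x_m) in {0,1}^m
   with i = sum_k x_k 2^(m-k), x_1 most significant.  bit i k = x_(k+1). *)
Definition bit (m : nat) (i : 'I_(2 ^ m)) (k : 'I_m) : bool :=
  odd (i %/ 2 ^ (m - k.+1)).

Definition bit2 (b : bool) : 'I_2 := if b then inord 1 else inord 0.

(* T = T_0^{(x) m}: entries of a Kronecker power are products of entries. *)
Definition Tm (m : nat) : 'M['F_2]_(2 ^ m) :=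
  \matrix_(i, j) \prod_(k < m) T0 (bit2 (bit i k)) (bit2 (bit j k)).

Definition isAut (n : nat) (M Q : 'M['F_2]_n) : Prop :=
  is_perm_mx Q /\ Q^T *m M *m Q = M.

(* P_sigma e_x = e_(x_sigma(1),...,x_sigma(m)): entry (y, x) is 1 iff
   y_k = x_(sigma k) for all k. *)
Definition Psig (m : nat) (s : 'S_m) : 'M['F_2]_(2 ^ m) :=
  \matrix_(i, j) ([forall k, bit i k == bit j (s k)])%:R.

From mathcomp Require Import all_boot all_order all_algebra all_fingroup.
From mathcomp Require Import zify.
Set Implicit Arguments. Unset Strict Implicit. Unset Printing Implicit Defensive.
Import GRing.Theory.
Local Open Scope ring_scope.

(* Identify an index x in {0,1}^m with the set of coordinates where x_k = 1.
   Then T is the 0/1 matrix of reverse inclusion, and a permutation matrix P_r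
   is an automorphism of a 0/1 matrix exactly when r preserves its relation.
   P_p T is the matrix of the twisted relation (x, y) |-> p x >= y, which
   determines p x as the largest y related to x; hence a permutation r
   preserving it must commute with p and preserve >= itself.  Finally an
   automorphism of the Boolean lattice maps atoms to atoms, hence is induced
   by a permutation tau of the coordinates, i.e. it is P_tau. *)

Section TwistedOrder.

Variables (T : finType) (le : rel T).
Hypotheses (le_refl : reflexive le) (le_trans : transitive le)
  (le_anti : antisymmetric le).

Lemma twisted_mono_perm (p r : {perm T}) :
  (forall i j, le (p (r i)) (r j) = le (p i) j) <->
  (forall i j, le (r i) (r j) = le i j) /\ commute r p.
Proof.
split=> [twisted | [r_mono rp] i j]; last by rewrite -permM rp permM r_mono.
have pr_rp y : p (r y) = r (p y).
  apply: le_anti; apply/andP; split; first by rewrite twisted le_refl.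
  have [a ra] : exists a, p (r a) = r (p y).
    by exists (r^-1 (p^-1 (r (p y))))%g; rewrite !permKV.
  have [b rb] : exists b, r b = p (r y) by exists (r^-1 (p (r y)))%g; rewrite permKV.
  have := twisted a b; rewrite ra rb => ->.
  apply: (@le_trans (p y)); first by rewrite -twisted ra le_refl.
  by rewrite -twisted rb le_refl.
split=> [i j|]; last by apply/permP => y; rewrite !permM pr_rp.
by rewrite -[i](permKV p) -pr_rp twisted.
Qed.

End TwistedOrder.

Section SubsetMonotone.

Variables (T : finType) (f : {set T} -> {set T}).
Hypothesis f_subset : forall X Y, (f X \subset f Y) = (X \subset Y).

Lemma subset_mono_inj : injective f.
Proof.
move=> X Y fXY; apply/eqP.
by rewrite eqEsubset -f_subset -[Y \subset X]f_subset fXY subxx.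
Qed.

Lemma subset_mono_surj Y : exists X, f X = Y.
Proof. by have [g _ gK] := injF_bij subset_mono_inj; exists (g Y). Qed.

Lemma subset_mono_set0 : f set0 = set0.
Proof.
have [X fX] := subset_mono_surj set0.
by apply/eqP; rewrite -subset0 -{2}fX f_subset sub0set.
Qed.

Lemma subset_mono_set1 k : exists l, f [set k] = [set l].
Proof.
have [l fk_l] : exists l, l \in f [set k].
  apply/set0Pn; rewrite -subset_mono_set0 (inj_eq subset_mono_inj).
  by apply/set0Pn; exists k; rewrite set11.
exists l; have [Z fZ] := subset_mono_surj [set l].
have : Z \subset [set k] by rewrite -f_subset fZ sub1set.
rewrite subset1 => /orP[/eqP<- // | /eqP Z0].
by move: fZ; rewrite Z0 subset_mono_set0 => /setP/(_ l); rewrite !inE eqxx.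
Qed.

Lemma subset_mono_imset : exists t : {perm T}, forall X, f X = t @: X.
Proof.
have [t tE] := fin_all_exists subset_mono_set1.
have t_inj : injective t.
  by move=> k k' tkk'; apply/set1_inj/subset_mono_inj; rewrite !tE tkk'.
exists (perm t_inj) => X; apply/setP => l.
rewrite -[l](permKV (perm t_inj)) (mem_imset _ _ (@perm_inj _ _)) -sub1set.
by rewrite [in LHS]permE -tE f_subset sub1set.
Qed.

End SubsetMonotone.

Lemma imset_perm_subset (T : finType) (t : {perm T}) (A B : {set T}) :
  (t @: A \subset t @: B) = (A \subset B).
Proof.
apply/idP/idP => [|/imsetS //]; move/(imsetS t^-1%g).
by rewrite -!imset_comp !(eq_imset _ (permK t)) !imset_id.
Qed.

Lemma nat_of_bool_inj (R : nzSemiRingType) : injective (fun b : bool => b%:R : R).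
Proof. by case; case=> // /eqP; rewrite ?oner_eq0 // eq_sym oner_eq0. Qed.

Lemma perm_mx_inj (R : nzSemiRingType) n : injective (@perm_mx R n).
Proof.
move=> s t st; apply/permP => i.
have := congr1 (fun M : 'M[R]_n => M i (s i)) st; rewrite /= !mxE eqxx.
by move/(@nat_of_bool_inj R)/esym/eqP.
Qed.

Definition relmx (R : pzSemiRingType) n (le : rel 'I_n) : 'M[R]_n :=
  \matrix_(i, j) (le i j)%:R.

Lemma mul_perm_relmx (R : pzSemiRingType) n (p : 'S_n) (le : rel 'I_n) :
  perm_mx p *m relmx R le = relmx R (fun i j => le (p i) j).
Proof. by apply/matrixP => i j; rewrite -row_permE !mxE. Qed.

Lemma isAut_perm_mx n (M : 'M['F_2]_n) (s : 'S_n) :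
  isAut M (perm_mx s) <-> forall i j, M (s i) (s j) = M i j.
Proof.
rewrite /isAut tr_perm_mx -row_permE -[s in _ *m perm_mx s]invgK -col_permE.
split=> [[_ /matrixP sM] i j | sM].
  by have := sM (s i) (s j); rewrite !mxE !permK.
split; first exact: perm_mx_is_perm.
by apply/matrixP => i j; rewrite !mxE -[in RHS](permKV s i) -[in RHS](permKV s j) sM.
Qed.

Lemma isAut_perm_relmx n (le : rel 'I_n) (s : 'S_n) :
  isAut (relmx _ le) (perm_mx s) <-> forall i j, le (s i) (s j) = le i j.
Proof.
rewrite isAut_perm_mx; split=> sM i j; last by rewrite !mxE sM.
by apply: (@nat_of_bool_inj 'F_2); have := sM i j; rewrite !mxE.
Qed.

Lemma isAut_perm_mul_relmx n (le : rel 'I_n) (P Q : 'M['F_2]_n) :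
  reflexive le -> transitive le -> antisymmetric le -> is_perm_mx P ->
  isAut (P *m relmx _ le) Q <-> isAut (relmx _ le) Q /\ Q *m P = P *m Q.
Proof.
move=> le_refl le_trans le_anti /is_perm_mxP[p ->].
have [/is_perm_mxP[r ->] | notAut] := boolP (is_perm_mx Q); last first.
  by split=> [[]|[[]]]; rewrite (negbTE notAut).
rewrite mul_perm_relmx !isAut_perm_relmx -!perm_mxM.
rewrite (twisted_mono_perm le_refl le_trans le_anti).
by split=> -[r_mono rp]; split=> //; [rewrite rp | exact: perm_mx_inj rp].
Qed.

Lemma bits_inj (m i j : nat) : (i < 2 ^ m)%N -> (j < 2 ^ m)%N ->
  (forall e, (e < m)%N -> odd (i %/ 2 ^ e) = odd (j %/ 2 ^ e)) -> i = j.
Proof.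
elim: m i j => [|m IH] i j; first by rewrite expn0 !ltnS !leqn0 => /eqP-> /eqP->.
move=> i_lt j_lt eq_bits.
rewrite (divn_eq i 2) (divn_eq j 2) !modn2.
have := eq_bits 0%N (ltn0Sn m); rewrite !expn0 !divn1 => ->.
congr (_ * _ + _)%N; apply: IH; try by rewrite ltn_divLR // -expnSr.
by move=> e e_lt; rewrite -!divnMA -expnS; apply: eq_bits.
Qed.

Section BinaryEncoding.

Variable m : nat.
Local Notation n := (2 ^ m)%N.

Definition bitset (i : 'I_n) : {set 'I_m} := [set k | bit i k].

Lemma bitset_inj : injective bitset.
Proof.
move=> i j /setP eq_ij; apply/val_inj/(bits_inj (ltn_ord i) (ltn_ord j)) => e e_lt.
have k_lt : (m - e.+1 < m)%N by lia.
have := eq_ij (Ordinal k_lt); rewrite !inE /bit /=.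
by have -> : (m - (m - e.+1).+1 = e)%N by lia.
Qed.

Lemma bitset_surj X : exists i, bitset i = X.
Proof.
have := @inj_card_onto _ _ bitset bitset_inj.
rewrite card_ord -cardsT -powersetT card_powerset cardsT card_ord leqnn.
by move=> /(_ isT X) /codomP[i ->]; exists i.
Qed.

Fact expn2_gt0 : (0 < n)%N. Proof. by rewrite expn_gt0. Qed.

Definition of_bitset (X : {set 'I_m}) : 'I_n :=
  odflt (Ordinal expn2_gt0) [pick i | bitset i == X].

Lemma of_bitsetK : cancel of_bitset bitset.
Proof.
move=> X; rewrite /of_bitset; case: pickP => [i /eqP // | no_i].
by have [i iX] := bitset_surj X; move: (no_i i); rewrite iX eqxx.
Qed.

Lemma bitsetK : cancel bitset of_bitset.
Proof. by move=> i; apply: bitset_inj; rewrite of_bitsetK. Qed.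

Definition bit_ge : rel 'I_n := fun i j => bitset j \subset bitset i.

Lemma bit_ge_refl : reflexive bit_ge.
Proof. by move=> i; apply: subxx. Qed.

Lemma bit_ge_trans : transitive bit_ge.
Proof. by move=> j i k ji kj; apply: subset_trans ji. Qed.

Lemma bit_ge_anti : antisymmetric bit_ge.
Proof. by move=> i j ij; apply: bitset_inj; apply/eqP; rewrite eqEsubset andbC. Qed.

Lemma Tm_relmx : Tm m = relmx _ bit_ge.
Proof.
apply/matrixP => i j; rewrite !mxE /bit_ge.
have T0E k : T0 (bit2 (bit i k)) (bit2 (bit j k)) = (bit j k ==> bit i k)%:R.
  by rewrite /T0 mxE /bit2; case: (bit i k); case: (bit j k); rewrite /= ?inordK.
under eq_bigr do rewrite T0E.
have [ji | /subsetPn[k]] := boolP (bitset j \subset bitset i).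
  by apply: big1 => k _; move/subsetP: ji => /(_ k); rewrite !inE; case: bit => // ->.
by rewrite !inE => jk ik; rewrite (bigD1 k) //= jk (negbTE ik) mul0r.
Qed.

Definition bitperm_fun (t : 'S_m) (i : 'I_n) : 'I_n := of_bitset (t @: bitset i).

Lemma bitperm_fun_inj t : injective (bitperm_fun t).
Proof.
move=> i j /(can_inj of_bitsetK)/(imset_inj (@perm_inj _ t)).
exact: bitset_inj.
Qed.

Definition bitperm t : 'S_n := perm (@bitperm_fun_inj t).

Lemma bitset_perm t i : bitset (bitperm t i) = t @: bitset i.
Proof. by rewrite permE of_bitsetK. Qed.

Lemma bitpermM : {morph bitperm : t s / t * s}%g.
Proof.
move=> t s; apply/permP => i; apply: bitset_inj.
by rewrite permM !bitset_perm -imset_comp; apply: eq_imset => k; rewrite permM.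
Qed.

Lemma bitperm_inj : injective bitperm.
Proof.
move=> t t' tt'; apply/permP => k; apply/set1_inj.
by rewrite -!imset_set1 -[[set k]]of_bitsetK -!bitset_perm tt'.
Qed.

Lemma bit_ge_mono_bitperm (r : 'S_n) :
  (forall i j, bit_ge (r i) (r j) = bit_ge i j) -> exists t, r = bitperm t.
Proof.
move=> r_mono; pose f X := bitset (r (of_bitset X)).
have f_subset X Y : (f X \subset f Y) = (X \subset Y).
  by have := r_mono (of_bitset Y) (of_bitset X); rewrite /bit_ge !of_bitsetK.
have [t tE] := subset_mono_imset f_subset.
by exists t; apply/permP => i; apply: bitset_inj; rewrite bitset_perm -tE /f bitsetK.
Qed.

Lemma Psig_bitperm s : Psig s = perm_mx (bitperm s).
Proof.
apply/matrixP => i j; rewrite !mxE permE /bitperm_fun -(inj_eq bitset_inj) of_bitsetK.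
congr (nat_of_bool _)%:R; apply/forallP/eqP => [eq_bits | img_eq k].
  apply/setP => l; rewrite -[l](permKV s) (mem_imset _ _ (@perm_inj _ s)) !inE.
  exact/eqP/eq_bits.
move/setP: img_eq => /(_ (s k)).
by rewrite (mem_imset _ _ (@perm_inj _ s)) !inE => ->.
Qed.

Lemma PsigM (t s : 'S_m) : Psig (t * s)%g = Psig t *m Psig s.
Proof. by rewrite !Psig_bitperm bitpermM perm_mxM. Qed.

Lemma Psig_inj : injective (@Psig m).
Proof. by move=> s t; rewrite !Psig_bitperm => /perm_mx_inj/bitperm_inj. Qed.

Lemma isAut_TmP Q : isAut (Tm m) Q <-> exists t, Q = Psig t.
Proof.
rewrite Tm_relmx; split=> [QA | [t ->]]; last first.
  rewrite Psig_bitperm isAut_perm_relmx => i j.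
  by rewrite /bit_ge !bitset_perm imset_perm_subset.
have [/is_perm_mxP[r Qr] _] := QA; move: QA; rewrite Qr isAut_perm_relmx.
by case/bit_ge_mono_bitperm => t ->; exists t; rewrite Psig_bitperm.
Qed.

End BinaryEncoding.

Theorem mainTheorem13 (m : nat) (P : 'M['F_2]_(2 ^ m)) :
  isAut (Tm m) P ->
  (forall Q : 'M['F_2]_(2 ^ m),
     isAut (P *m Tm m) Q <-> (isAut (Tm m) Q /\ Q *m P = P *m Q)) /\
  (forall sigma : 'S_m, P = Psig sigma ->
     forall Q : 'M['F_2]_(2 ^ m),
       isAut (P *m Tm m) Q <->
       exists tau : 'S_m, (tau * sigma = sigma * tau)%g /\ Q = Psig tau).
Proof.
move=> [P_perm _].
have AutPT Q : isAut (P *m Tm m) Q <-> isAut (Tm m) Q /\ Q *m P = P *m Q.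
  rewrite Tm_relmx; apply: isAut_perm_mul_relmx P_perm.
  - exact: bit_ge_refl.
  - exact: bit_ge_trans.
  - exact: bit_ge_anti.
split=> // sigma eP Q; rewrite AutPT eP isAut_TmP.
split=> [[[tau ->]] | [tau [tau_sigma ->]]].
  by rewrite -!PsigM => /Psig_inj; exists tau.
by split; [exists tau | rewrite -!PsigM tau_sigma].
Qed.
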